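(* Let $(Y_i)_{i\ge1}$ be i.i.d. random variables taking non-negative integer values, and suppose $\mathbb{E}[Y_i^c]\le1$ for some constant $c\ge0$. Let $M=\sup_{j\ge0}\prod_{1\le i\le j}Y_i$ (the empty product being $1$). Then for every $A>0$, \[ \mathbb{P}[M\ge A]\le A^{-c}. \] *)

From HB Require Import structures.
From mathcomp Require Import all_boot all_order all_algebra.
From mathcomp Require Import all_classical all_reals all_analysis.
Set Implicit Arguments. Unset Strict Implicit. Unset Printing Implicit Defensive.
Import Order.TTheory GRing.Theory Num.Theory.
Local Open Scope classical_set_scope.
Local Open Scope ring_scope.

Definition mutually_independent d (T : measurableType d) (R : realType)
    (P : probability T R) (X : nat -> T -> R) : Prop :=
  forall (s : seq nat) (B : nat -> set R), uniq s ->
    (forall i, measurable (B i)) ->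
    P (\bigcap_(i in [set i | i \in s]) (X i @^-1` B i)) =
    (\prod_(i <- s) P (X i @^-1` B i))%E.

Definition identically_distributed d (T : measurableType d) (R : realType)
    (P : probability T R) (X : nat -> T -> R) : Prop :=
  forall i (B : set R), measurable B -> P (X i @^-1` B) = P (X 0%N @^-1` B).

Definition sup_prod (R : realType) T (X : nat -> T -> R) (w : T) : \bar R :=
  ereal_sup [set (\prod_(i < j) X i w)%:E | j in [set: nat]].

From HB Require Import structures.
From mathcomp Require Import all_boot all_order all_algebra.
From mathcomp Require Import all_classical all_reals all_analysis.
From mathcomp Require Import zify.
Import measurable_realfun.
Set Implicit Arguments. Unset Strict Implicit. Unset Printing Implicit Defensive.
Import Order.TTheory GRing.Theory Num.Theory.
Local Open Scope classical_set_scope.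
Local Open Scope ring_scope.

(* Fix K > A and cap every Y_i at K.  The products are integers, so M >= A
   exactly when some capped partial product reaches A, and the events
   "A is reached within n steps" increase to {M >= A}.  The first n capped
   values take finitely many values, so by independence the probability of
   reaching A within n steps, starting from the value x, is a sum over
   bounded tuples of products of the one-step probabilities q_k.  This sum
   W_n(x) is at most 1, and W_(n+1)(x) = sum_k q_k W_n(x k) when x < A;
   since sum_k q_k k^c <= E[Y^c] <= 1, induction on n gives
   W_n(x) <= x^c / A^c -- a discrete optional stopping argument for the
   supermartingale (Y_1 ... Y_j)^c.  Continuity from below concludes. *)

Fixpoint bounded_tuples (K n : nat) : seq (seq nat) :=
  if n is n'.+1 then [seq k :: s | k <- iota 0 K.+1, s <- bounded_tuples K n']
  else [:: [::]].

Lemma mem_bounded_tuples K n s :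
  (s \in bounded_tuples K n) = (size s == n) && all (fun k => k <= K)%N s.
Proof.
elim: n s => [|n IH] [|k s] //; cbn [bounded_tuples].
  by apply/negbTE/allpairsP => -[[? ?] []].
apply/allpairsP/idP => [[[k' s'] [+ + [-> ->]]]|].
- by rewrite mem_iota IH /= ltnS => -> /andP[/eqP -> ->]; rewrite eqxx.
- by case/and3P=> sz kK sK; exists (k, s); rewrite mem_iota ltnS kK IH -eqSS sz.
Qed.

Lemma bounded_tuples_uniq K n : uniq (bounded_tuples K n).
Proof.
elim: n => // n IH; cbn [bounded_tuples]; rewrite allpairs_uniq ?iota_uniq //.
by move=> [k s] [k' s'] _ _ /= [-> ->].
Qed.

Lemma sum_prod_bounded_tuples (R : comPzSemiRingType) K n (q : nat -> R) :
  \sum_(s <- bounded_tuples K n) \prod_(k <- s) q k =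
  (\sum_(k <- iota 0 K.+1) q k) ^+ n.
Proof.
elim: n => [|n IH]; first by rewrite big_seq1 big_nil.
cbn [bounded_tuples]; rewrite big_allpairs_dep exprS -IH big_distrl /=.
apply: eq_bigr => k _.
by rewrite big_distrr; apply: eq_bigr => s _; rewrite big_cons.
Qed.

Definition reaches (R : numDomainType) (A x : R) (s : seq nat) : bool :=
  has (fun j => A <= x * \prod_(i < j) (nth 0%N s i)%:R) (iota 0 (size s).+1).

Lemma reaches_nil (R : numDomainType) (A x : R) : reaches A x [::] = (A <= x).
Proof. by rewrite /reaches /= big_ord0 mulr1 orbF. Qed.

Lemma reaches_cons (R : numDomainType) (A x : R) k s :
  reaches A x (k :: s) = (A <= x) || reaches A (x * k%:R) s.
Proof.
rewrite /reaches (_ : (size (k :: s)).+1 = 1 + (size s).+1) // iotaD has_cat.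
rewrite [iota 0 1]/= has_seq1 big_ord0 mulr1; congr (_ || _).
rewrite add0n [iota 1 _](iotaDl 1 0) has_map; apply: eq_has => j /=.
by rewrite big_ord_recl mulrA.
Qed.

Section ReachingWeight.
Variables (R : realType) (A c : R) (K : nat) (q : nat -> R).
Hypotheses (A_gt0 : 0 < A) (c_ge0 : 0 <= c) (q_ge0 : forall k, 0 <= q k).
Hypotheses (q_sum_le1 : \sum_(k <- iota 0 K.+1) q k <= 1).
Hypotheses (q_moment_le1 : \sum_(k <- iota 0 K.+1) q k * k%:R `^ c <= 1).

Let powRA_gt0 : 0 < A `^ c. Proof. exact: powR_gt0. Qed.

Let one_le_powR_ratio x : A <= x -> 1 <= x `^ c / A `^ c.
Proof.
move=> Ax; rewrite ler_pdivlMr // mul1r ge0_ler_powR ?nnegrE ?(ltW A_gt0) //.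
exact: le_trans (ltW A_gt0) Ax.
Qed.

Lemma sum_prod_reaches_le n x : 0 <= x ->
  \sum_(s <- bounded_tuples K n | reaches A x s) \prod_(k <- s) q k <= x `^ c / A `^ c.
Proof.
have prod_ge0 s : 0 <= \prod_(k <- s) q k by exact: prodr_ge0.
elim: n x => [|n IH] x x_ge0.
  rewrite big_mkcond big_seq1 reaches_nil big_nil.
  by case: ifP => [/one_le_powR_ratio|_]; last by rewrite divr_ge0 ?powR_ge0.
have [Ax|xA] := leP A x.
  apply: le_trans (one_le_powR_ratio Ax).
  apply: le_trans (_ : \sum_(s <- bounded_tuples K n.+1) \prod_(k <- s) q k <= 1).
    by rewrite big_mkcond; apply: ler_sum => s _; case: ifP.
  by rewrite sum_prod_bounded_tuples exprn_ile1 // sumr_ge0.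
cbn [bounded_tuples]; rewrite big_mkcond big_allpairs_dep /=.
under eq_bigr => k _.
  under eq_bigr => s _ do rewrite reaches_cons leNgt xA big_cons /=.
  rewrite -big_mkcond -big_distrr /=.
  over.
apply: le_trans (_ : \sum_(k <- iota 0 K.+1) q k * ((x * k%:R) `^ c / A `^ c) <= _).
  by apply: ler_sum => k _; rewrite ler_wpM2l // IH // mulr_ge0.
rewrite -[X in _ <= X]mulr1.
apply: le_trans (ler_wpM2l _ q_moment_le1); last by rewrite divr_ge0 ?powR_ge0.
rewrite mulr_sumr; apply: ler_sum => k _.
by rewrite powRM ?ler0n // mulrAC mulrCA.
Qed.

End ReachingWeight.

Lemma minn_mul_leq x y K : (minn (x * y) K <= minn x K * minn y K)%N.
Proof.
case: (posnP x) => [->|x_gt0]; first by rewrite mul0n min0n.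
case: (posnP y) => [->|y_gt0]; first by rewrite muln0 min0n.
case: (leqP K x) => Kx; case: (leqP K y) => Ky; nia.
Qed.

Lemma minn_prod_leq (I : Type) (r : seq I) (a : I -> nat) K :
  (minn (\prod_(i <- r) a i) K <= \prod_(i <- r) minn (a i) K)%N.
Proof.
elim: r => [|i r IH]; first by rewrite !big_nil geq_minl.
by rewrite !big_cons; exact: leq_trans (minn_mul_leq _ _ _) (leq_mul (leqnn _) IH).
Qed.

Lemma ler_natr_prod_minn (R : numDomainType) (A : R) K (I : Type) (r : seq I)
    (a : I -> nat) :
  A < K%:R ->
  (A <= (\prod_(i <- r) a i)%:R) = (A <= (\prod_(i <- r) minn (a i) K)%:R).
Proof.
move=> AK; apply/idP/idP => A_le.
- apply: (@le_trans _ _ (minn (\prod_(i <- r) a i) K)%:R).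
    by rewrite /minn; case: ifP => _ //; exact: ltW.
  by rewrite ler_nat minn_prod_leq.
- apply: le_trans A_le _; rewrite ler_nat; apply: leq_prod => i _; exact: geq_minl.
Qed.

Lemma ereal_sup_int_ge (R : realType) (u : nat -> R) (A : R) :
  (forall j, u j \is a Num.int) ->
  (A%:E <= ereal_sup [set (u j)%:E | j in [set: nat]])%E -> exists j, A <= u j.
Proof.
move=> u_int A_le_sup; have [//|/forallNP u_lt] := pselect (exists j, A <= u j).
have u_le j : u j <= (Num.ceil A - 1)%:~R.
  rewrite -(floorK (u_int j)) ler_int.
  have : Num.floor (u j) < Num.ceil A.
    by rewrite ceil_gt_int floorK // ltNge; apply/negP/u_lt.
  lia.
have : (ereal_sup [set (u j)%:E | j in [set: nat]] <= (Num.ceil A - 1)%:~R%:E)%E.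
  by apply: ge_ereal_sup => _ [j _ <-]; rewrite lee_fin.
by move/(le_trans A_le_sup); rewrite lee_fin leNgt ceilB1_lt.
Qed.

Lemma preimage_pred_finite_range (T : Type) (X : choiceType) (f : T -> X) (L : seq X)
    (S : pred X) :
  (forall w, f w \in L) ->
  [set w | S (f w)] = \bigcup_(x in [set` [seq x <- L | S x]]) f @^-1` [set x].
Proof.
move=> fL; apply/seteqP; split => [w Sw|w [x]].
- by exists (f w) => //=; rewrite mem_filter Sw fL.
- by rewrite /= mem_filter => /andP[Sx _] ->.
Qed.

Lemma measurable_preimage_pred_finite_range d (T : measurableType d) (X : choiceType)
    (f : T -> X) (L : seq X) (S : pred X) :
  (forall w, f w \in L) -> (forall x, measurable (f @^-1` [set x])) ->
  measurable [set w | S (f w)].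
Proof.
move=> fL mf; rewrite (preimage_pred_finite_range _ fL).
exact: fin_bigcup_measurable (finite_seq _) (fun x _ => mf x).
Qed.

Lemma measure_preimage_pred_finite_range d (T : measurableType d) (R : realType)
    (mu : {measure set T -> \bar R}) (X : choiceType) (f : T -> X) (L : seq X)
    (S : pred X) :
  uniq L -> (forall w, f w \in L) -> (forall x, measurable (f @^-1` [set x])) ->
  mu [set w | S (f w)] = (\sum_(x <- L | S x) mu (f @^-1` [set x]))%E.
Proof.
move=> L_uniq fL mf; rewrite -big_filter fsbig_seq ?filter_uniq //.
rewrite -measure_fsbig ?finite_seq //; last exact: trivIset_preimage1.
by rewrite fsbig_setU ?finite_seq // (preimage_pred_finite_range _ fL).
Qed.

Lemma measure_bigcup_nondecreasing_le d (T : measurableType d) (R : realType)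
    (mu : {measure set T -> \bar R}) (F : (set T) ^nat) (l : \bar R) :
  (forall n, measurable (F n)) -> {homo F : n m / (n <= m)%N >-> (n <= m)%O} ->
  (forall n, (mu (F n) <= l)%E) -> (mu (\bigcup_n F n) <= l)%E.
Proof.
move=> mF F_nd mu_le; have mU := bigcup_measurable (fun k (_ : setT k) => mF k).
have cvg_mu := nondecreasing_cvg_mu (mu := mu) mF mU F_nd.
rewrite -(cvg_lim _ cvg_mu) //; apply: lime_le; first exact: cvgP cvg_mu.
exact: nearW.
Qed.

Section CappedValues.
Variables (d : measure_display) (T : measurableType d) (R : realType) (P : probability T R).
Variables (Y : nat -> {RV P >-> R}) (K : nat).
Hypothesis Y_nat : forall i w, Y i w \in Num.nat.

Definition capped i w : nat := minn (Num.truncn (Y i w)) K.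

Definition capped_level (k : nat) : set R :=
  if (k < K)%N then [set k%:R] else `[K%:R, +oo[%classic.

Lemma measurable_capped_level k : measurable (capped_level k).
Proof.
by rewrite /capped_level; case: ifP => _; [exact: measurable_set1 | exact: measurable_itv].
Qed.

Lemma capped_levelP (y : R) k : y \in Num.nat -> (k <= K)%N ->
  capped_level k y <-> minn (Num.truncn y) K = k.
Proof.
move=> /natrP[n ->] kK; rewrite natrK /capped_level; case: ifP => kK' /=.
- by split => [/eqP|nk]; [rewrite eqr_nat => /eqP nk; lia | congr _%:R; lia].
- by rewrite in_itv /= andbT ler_nat; split => ?; lia.
Qed.

Lemma capped_preimage i k : (k <= K)%N ->
  capped i @^-1` [set k] = Y i @^-1` capped_level k.
Proof. by move=> kK; apply/seteqP; split => w /capped_levelP => /(_ (Y_nat i w) kK). Qed.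

Lemma capped_le i w : (capped i w <= K)%N.
Proof. exact: geq_minr. Qed.

Lemma capped_preimage_gt i k : (K < k)%N -> capped i @^-1` [set k] = set0.
Proof.
move=> Kk; apply/seteqP; split => // w /= ckw.
by have := capped_le i w; rewrite ckw leqNgt Kk.
Qed.

Lemma measurable_capped_preimage i k : measurable (capped i @^-1` [set k]).
Proof.
have [kK|/(capped_preimage_gt i) -> //] := leqP k K.
by rewrite capped_preimage //; apply: measurable_funPTI; exact: measurable_capped_level.
Qed.

Definition capped_prefix n w : seq nat := [seq capped i w | i <- iota 0 n].

Lemma capped_prefix_bounded n w : capped_prefix n w \in bounded_tuples K n.
Proof.
rewrite mem_bounded_tuples size_map size_iota eqxx.
by apply/allP => _ /mapP[i _ ->]; exact: capped_le.
Qed.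

Lemma capped_prefix_preimage n s : size s = n ->
  capped_prefix n @^-1` [set s] =
  \bigcap_(i in [set i | i \in iota 0 n]) capped i @^-1` [set nth 0%N s i].
Proof.
move=> size_s; apply/seteqP; split => w /=.
- move=> <- i; rewrite /= mem_iota => /andP[_ lt_in].
  by rewrite /capped_prefix (nth_map 0%N) ?size_iota // nth_iota.
- move=> capped_w; apply: (@eq_from_nth _ 0%N); first by rewrite size_map size_iota.
  move=> i; rewrite size_map size_iota => lt_in.
  by rewrite (nth_map 0%N) ?size_iota // nth_iota //; apply: capped_w; rewrite /= mem_iota.
Qed.

Lemma measurable_capped_prefix_preimage n s : measurable (capped_prefix n @^-1` [set s]).
Proof.
have [size_s|size_s] := eqVneq (size s) n.
  rewrite capped_prefix_preimage // bigcap_seq.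
  exact: bigsetI_measurable (fun i _ => measurable_capped_preimage i _).
rewrite (_ : _ @^-1` _ = set0) //; apply/seteqP; split => // w /= prefix_w.
by move: size_s; rewrite -prefix_w size_map size_iota eqxx.
Qed.

Definition reached_by (A : R) n : set T := [set w | reaches A 1 (capped_prefix n w)].

Lemma reaches_capped_prefixP (A : R) n w :
  reaches A 1 (capped_prefix n w) <->
  exists2 j, (j <= n)%N & A <= \prod_(i < j) (capped i w)%:R.
Proof.
have prodE j : (j <= n)%N ->
    \prod_(i < j) (nth 0%N (capped_prefix n w) i)%:R = \prod_(i < j) (capped i w)%:R.
  move=> jn; apply: eq_bigr => i _; have lt_in := leq_trans (ltn_ord i) jn.
  by rewrite (nth_map 0%N) ?nth_iota ?size_iota.
rewrite /reaches.
have -> : size (capped_prefix n w) = n by rewrite size_map size_iota.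
split.
- case/seq.hasP => j; rewrite mem_iota ltnS => /andP[_ jn].
  by rewrite mul1r prodE //; exists j.
- case=> j jn A_le; apply/seq.hasP; exists j; first by rewrite mem_iota ltnS.
  by rewrite mul1r prodE.
Qed.

Lemma reached_by_nondecreasing A :
  {homo reached_by A : n m / (n <= m)%N >-> (n <= m)%O}.
Proof.
move=> n m nm; rewrite subsetEset => w /reaches_capped_prefixP[j jn A_le].
by apply/reaches_capped_prefixP; exists j => //; exact: leq_trans jn nm.
Qed.

Lemma measurable_reached_by A n : measurable (reached_by A n).
Proof.
apply: measurable_preimage_pred_finite_range (capped_prefix_bounded n) _.
exact: measurable_capped_prefix_preimage.
Qed.

Lemma sup_prod_geE A : A < K%:R ->
  [set w | (A%:E <= sup_prod (fun i => Y i : T -> R) w)%E] = \bigcup_n reached_by A n.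
Proof.
move=> AK; apply/seteqP; split => w /=.
- case/ereal_sup_int_ge => [j|j A_le].
    by rewrite intrE rpred_prod // => i _; exact: Y_nat.
  exists j => //; apply/reaches_capped_prefixP; exists j => //.
  by rewrite -natr_prod -ler_natr_prod_minn // prod_truncnK.
- case=> n _ /reaches_capped_prefixP[j _].
  rewrite -natr_prod -ler_natr_prod_minn // prod_truncnK // => A_le.
  by apply: le_trans (ereal_sup_ubound _); last by exists j.
Qed.

Definition capped_prob k : R := fine (P (capped 0%N @^-1` [set k])).

Lemma capped_prob_ge0 k : 0 <= capped_prob k.
Proof. exact/fine_ge0/measure_ge0. Qed.

Lemma capped_moment_le c : 0 <= c ->
  ((\sum_(k <- iota 0 K.+1) capped_prob k * k%:R `^ c)%:E <=
    'E_P[fun w => (Y 0%N w `^ c)%R])%E.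
Proof.
move=> c_ge0; rewrite expectation.unlock.
have mC k := measurable_capped_preimage 0%N k.
pose f k w : \bar R := (k%:R `^ c * \1_(capped 0%N @^-1` [set k]) w)%:E.
have mf k : measurable_fun setT (f k).
  apply/measurable_EFinP/measurable_funM; first exact: measurable_cst.
  exact: measurable_indic.
have f_ge0 k w : setT w -> (0 <= f k w)%E.
  by rewrite lee_fin mulr_ge0 ?powR_ge0 // indicE ler0n.
have -> : (\sum_(k <- iota 0 K.+1) capped_prob k * k%:R `^ c)%:E =
    (\int[P]_w \sum_(k <- iota 0 K.+1) f k w)%E.
  rewrite (ge0_integral_sum _ measurableT) // -sumEFin; apply: eq_bigr => k _.
  rewrite /f; under eq_integral do rewrite EFinM.
  rewrite ge0_integralZl_EFin ?powR_ge0 //; last exact/measurable_EFinP/measurable_indic.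
  by rewrite integral_indic // setIT mulrC EFinM fineK ?fin_num_measure.
apply: ge0_le_integral => //.
- by move=> w _; apply: sume_ge0 => k _; exact: f_ge0.
- exact: emeasurable_sum.
- apply/measurable_EFinP.
  exact: measurableT_comp (measurable_powR c) (measurable_funPT (Y 0%N)).
move=> w _; rewrite sumEFin lee_fin.
rewrite (bigD1_seq (capped 0%N w)) ?iota_uniq ?mem_iota ?ltnS ?capped_le //=.
rewrite big1_seq => [|k /andP[k_neq _]]; last first.
  by rewrite indicE memNset ?mulr0 // => /esym/eqP; rewrite (negbTE k_neq).
rewrite addr0 indicE mem_set // mulr1 -[Y 0%N w](truncnK (Y_nat 0 w)).
by rewrite ge0_ler_powR ?nnegrE ?ler0n // ler_nat geq_minl.
Qed.

Section IdenticallyDistributed.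
Hypothesis Y_ident : identically_distributed P (fun i => Y i : T -> R).

Lemma capped_probE i k : P (capped i @^-1` [set k]) = (capped_prob k)%:E.
Proof.
rewrite fineK ?fin_num_measure //; last exact: measurable_capped_preimage.
have [kK|Kk] := leqP k K; last by rewrite !capped_preimage_gt.
by rewrite !capped_preimage // Y_ident //; exact: measurable_capped_level.
Qed.

Lemma sum_capped_prob : \sum_(k <- iota 0 K.+1) capped_prob k = 1.
Proof.
apply: EFin_inj; rewrite -sumEFin; under eq_bigr do rewrite -(capped_probE 0%N).
rewrite -(measure_preimage_pred_finite_range P xpredT (iota_uniq 0 K.+1)).
- by rewrite (_ : [set w | _] = setT); [exact: probability_setT | apply/seteqP].
- by move=> w; rewrite mem_iota ltnS capped_le.
- exact: measurable_capped_preimage.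
Qed.

Hypothesis Y_indep : mutually_independent P (fun i => Y i : T -> R).

Lemma probability_capped_prefix n s : s \in bounded_tuples K n ->
  P (capped_prefix n @^-1` [set s]) = (\prod_(k <- s) capped_prob k)%:E.
Proof.
rewrite mem_bounded_tuples => /andP[/eqP size_s /allP s_le].
have nth_le i : (nth 0%N s i <= K)%N.
  by case: (ltnP i (size s)) => [/(mem_nth 0%N)/s_le // | /(nth_default 0%N) ->].
rewrite capped_prefix_preimage //.
under eq_bigcapr do rewrite capped_preimage //.
rewrite Y_indep ?iota_uniq //; last by move=> i; exact: measurable_capped_level.
rewrite [LHS](eq_bigr (fun i => (capped_prob (nth 0%N s i))%:E)) => [|i _].
  by rewrite prodEFin [in RHS](big_nth 0%N) size_s /index_iota subn0.
by rewrite -capped_preimage // capped_probE.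
Qed.

Lemma probability_reached_by_le (A c : R) n : 0 < A -> 0 <= c ->
  ('E_P[fun w => (Y 0%N w `^ c)%R] <= 1)%E ->
  (P (reached_by A n) <= (A `^ (- c))%:E)%E.
Proof.
move=> A_gt0 c_ge0 moment_le1.
have q_moment_le1 : \sum_(k <- iota 0 K.+1) capped_prob k * k%:R `^ c <= 1.
  by rewrite -lee_fin; apply: le_trans moment_le1; exact: capped_moment_le.
rewrite /reached_by (measure_preimage_pred_finite_range P _ (bounded_tuples_uniq K n)
  (capped_prefix_bounded n) (measurable_capped_prefix_preimage n)).
rewrite big_seq_cond (eq_bigr (fun s => (\prod_(k <- s) capped_prob k)%:E)); last first.
  by move=> s /andP[s_in _]; exact: probability_capped_prefix.
rewrite -big_seq_cond sumEFin lee_fin powRN.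
have := sum_prod_reaches_le A_gt0 c_ge0 capped_prob_ge0 _ q_moment_le1 n ler01.
by rewrite sum_capped_prob powR1 div1r; apply.
Qed.

End IdenticallyDistributed.

End CappedValues.

Theorem lemma4p1 (d : measure_display) (T : measurableType d) (R : realType)
    (P : probability T R) (Y : nat -> {RV P >-> R}) (c : R) :
  mutually_independent P (fun i => Y i : T -> R) ->
  identically_distributed P (fun i => Y i : T -> R) ->
  (forall i w, Y i w \in Num.nat) ->
  0 <= c ->
  (forall i, ('E_P[fun w => (Y i w `^ c)%R] <= 1)%E) ->
  forall A : R, 0 < A ->
    (P [set w | (A%:E <= sup_prod (fun i => Y i : T -> R) w)%E]
       <= (A `^ (- c))%:E)%E.
Proof.
move=> Y_indep Y_ident Y_nat c_ge0 moment_le1 A A_gt0.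
rewrite (sup_prod_geE Y_nat (truncnS_gt A)).
apply: measure_bigcup_nondecreasing_le.
- exact: measurable_reached_by.
- exact: reached_by_nondecreasing.
- by move=> n; apply: probability_reached_by_le => //; exact: moment_le1.
Qed.
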